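(* Let $q:\mathcal U\to\mathbb R^p$ be continuous, differentiable on $\mathrm{Int}(\mathcal U)$, with $Dq$ symmetric and positive definite on $\mathrm{Int}(\mathcal U)$, and suppose $\mathcal Y:=q(\mathcal U)$ is convex. Then $q(u)\in\mathrm{Int}(\mathcal Y)$ for every $u\in\mathrm{Int}(\mathcal U)$.
   Context: $\mathcal U\subset\mathbb R^p$ is a compact convex set with nonempty interior. $Dq$ denotes the Jacobian of $q$. *)

From HB Require Import structures.
From mathcomp Require Import all_boot all_order all_algebra.
From mathcomp Require Import all_classical all_reals all_analysis.
Set Implicit Arguments. Unset Strict Implicit. Unset Printing Implicit Defensive.
Import Order.TTheory GRing.Theory Num.Theory.
Import numFieldNormedType.Exports.
Local Open Scope ring_scope.
Local Open Scope classical_set_scope.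

Definition convex_rV (R : realType) (p : nat) (A : set 'rV[R]_p) : Prop :=
  convex_set (A : set (convex_lmodType 'rV[R]_p)).

Definition sym_posdef (R : realType) (p : nat) (M : 'M[R]_p) : Prop :=
  M^T = M /\ forall v : 'rV[R]_p, v != 0 -> 0 < (v *m M *m v^T) 0 0.

From HB Require Import structures.
From mathcomp Require Import all_boot all_order all_algebra.
From mathcomp Require Import all_classical all_reals all_analysis.
From mathcomp Require Import ring lra.
Import Order.TTheory GRing.Theory Num.Theory Num.Def.
Import numFieldNormedType.Exports.
Set Implicit Arguments. Unset Strict Implicit. Unset Printing Implicit Defensive.
Local Open Scope ring_scope.
Local Open Scope classical_set_scope.

(* If q u were a boundary point of the convex set Y = q(U), projecting points
   outside Y near q u onto Y would give, for every e > 0, a unit direction a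
   with <a, y - q u> <= e for all y in Y.  But the Jacobian J of q at u is
   invertible, so q (u + t a J^-1) = q u + t a + o(t) uniformly in |a| <= 1:
   for a fixed small t this point of Y satisfies <a, y - q u> >= t/2, which
   contradicts e = t/4. *)

Section MatrixNorm.
Variables (R : realFieldType) (m n : nat).
Implicit Types A : 'M[R]_(m, n).

Lemma mx_norm_entry A i j : `|A i j| <= `|A|.
Proof. by rewrite [`|A|]mx_normrE; exact: (le_bigmax _ _ (i, j)). Qed.

Lemma mx_norm_le A c : 0 <= c -> (forall i j, `|A i j| <= c) -> `|A| <= c.
Proof. by move=> c0 Ac; rewrite [`|A|]mx_normrE; apply: bigmax_le => // -[i j] _. Qed.

End MatrixNorm.

Section RowDot.
Variables (R : realFieldType) (p : nat).
Implicit Types a v w : 'rV[R]_p.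

Definition rdot a w := \sum_(i < p) a 0 i * w 0 i.

Lemma rdotDr a v w : rdot a (v + w) = rdot a v + rdot a w.
Proof. by rewrite /rdot -big_split; apply: eq_bigr => i _; rewrite mxE mulrDr. Qed.

Lemma rdotZl k a w : rdot (k *: a) w = k * rdot a w.
Proof. by rewrite /rdot mulr_sumr; apply: eq_bigr => i _; rewrite mxE mulrA. Qed.

Lemma rdotZr k a w : rdot a (k *: w) = k * rdot a w.
Proof. by rewrite /rdot mulr_sumr; apply: eq_bigr => i _; rewrite mxE mulrCA. Qed.

Lemma rdotBZ a d (l : R) :
  rdot (a - l *: d) (a - l *: d) = rdot a a - 2 * l * rdot a d + l ^+ 2 * rdot d d.
Proof.
rewrite /rdot !mulr_sumr -sumrB -big_split /=; apply: eq_bigr => i _.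
by rewrite !mxE; ring.
Qed.

Lemma rdot_ge0 v : 0 <= rdot v v.
Proof. by apply: sumr_ge0 => i _; rewrite -expr2 sqr_ge0. Qed.

Lemma normr_rdot_le a w : `|rdot a w| <= p%:R * (`|a| * `|w|).
Proof.
apply: le_trans (ler_norm_sum _ _ _) _.
suff <- : \sum_(i < p) `|a| * `|w| = p%:R * (`|a| * `|w|).
  by apply: ler_sum => i _; rewrite normrM ler_pM ?mx_norm_entry.
by rewrite sumr_const card_ord mulr_natl.
Qed.

Lemma sqr_norm_le_rdot v : `|v| ^+ 2 <= rdot v v.
Proof.
rewrite (_ : `|v| = mx_norm v) //.
have [->|/mx_norm_neq0 [[i j] /= vij]] := eqVneq (mx_norm v) 0.
  by rewrite expr0n rdot_ge0.
rewrite vij [i]ord1 real_normK ?num_real //.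
by rewrite /rdot (bigD1 j) //= -expr2 lerDl sumr_ge0 // => k _; rewrite -expr2 sqr_ge0.
Qed.

Lemma rdot_le_sqr_norm v : rdot v v <= p%:R * `|v| ^+ 2.
Proof. by rewrite expr2 -[rdot v v]ger0_norm ?rdot_ge0 ?normr_rdot_le. Qed.

Lemma rdot_ge_near_scale a w (t s : R) : `|a| = 1 -> 0 <= t ->
  `|w - t *: a| <= s -> t - p%:R * s <= rdot a w.
Proof.
move=> a1 t0 ws; rewrite -(subrK (t *: a) w) rdotDr rdotZr.
have aa : t <= t * rdot a a.
  by apply: ler_peMr => //; rewrite -(expr1n _ 2) -a1 sqr_norm_le_rdot.
have := normr_rdot_le a (w - t *: a); rewrite a1 mul1r ler_norml => /andP[err _].
have := ler_wpM2l (ler0n R p) ws; lra.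
Qed.

Lemma normr_mulmx_le n (N : 'M[R]_(p, n)) v : `|v *m N| <= p%:R * (`|v| * `|N|).
Proof.
apply: mx_norm_le => [|i j]; first by rewrite !mulr_ge0.
rewrite mxE; apply: le_trans (ler_norm_sum _ _ _) _.
suff <- : \sum_(k < p) `|v| * `|N| = p%:R * (`|v| * `|N|).
  by apply: ler_sum => k _; rewrite normrM ler_pM ?mx_norm_entry.
by rewrite sumr_const card_ord mulr_natl.
Qed.

Lemma rdot_dist_continuous z :
  continuous (fun y : 'rV[R]_p => rdot (z - y) (z - y)).
Proof.
apply: continuous_big => [|i _ x]; first exact: add_continuous.
have zi_cont : {for x, continuous (fun y : 'rV[R]_p => z 0 i - y 0 i)}.
  exact: continuousB (@cst_continuous _ _ _ _) (@coord_continuous _ _ _ _ _ _).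
have -> : (fun y : 'rV[R]_p => (z - y) 0 i * (z - y) 0 i) =
          (fun y => (z 0 i - y 0 i) * (z 0 i - y 0 i)).
  by apply: funext => y; rewrite !mxE.
exact: (continuousM zi_cont zi_cont).
Qed.

End RowDot.

Section NearestPoint.
Variables (R : realType) (p : nat) (Y : set 'rV[R]_p).
Implicit Types y z P : 'rV[R]_p.

Lemma nearest_point_exists z : compact Y -> Y !=set0 ->
  exists2 P, Y P & forall y, Y y -> rdot (z - P) (z - P) <= rdot (z - y) (z - y).
Proof.
move=> cY Y0.
have [P /set_mem YP Pmin] := EVT_min_rV Y0 cY
  (continuous_subspaceT (@rdot_dist_continuous R p z)).
by exists P => // y /mem_set /Pmin.
Qed.

Lemma nearest_point_normal z P : convex_rV Y -> Y P ->
  (forall y, Y y -> rdot (z - P) (z - P) <= rdot (z - y) (z - y)) ->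
  forall y, Y y -> rdot (z - P) (y - P) <= 0.
Proof.
move=> cvY YP Pmin y Yy; set a := z - P; set d := y - P.
have segment_ineq l : 0 <= l -> l <= 1 -> 2 * l * rdot a d <= l ^+ 2 * rdot d d.
  move=> l0 l1.
  have /set_mem Yl := cvY y P (Itv01 l0 l1) (mem_set Yy) (mem_set YP).
  have := Pmin _ Yl.
  have -> : z - (l *: y + (1 - l) *: P) = a - l *: d.
    by apply/rowP => i; rewrite !mxE; ring.
  rewrite rdotBZ; lra.
have dd0 := rdot_ge0 d.
rewrite leNgt; apply/negP => ad0.
(* the quadratic in l is negative at l = <a,d> / (<a,d> + <d,d>) *)
set l := rdot a d / (rdot a d + rdot d d).
have s0 : 0 < rdot a d + rdot d d by lra.
have lpos : 0 < l by rewrite divr_gt0.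
have l1 : l <= 1 by rewrite ler_pdivrMr // mul1r; lra.
have el : l * (rdot a d + rdot d d) = rdot a d by rewrite mulfVK // gt_eqF.
have := segment_ineq l (ltW lpos) l1; nra.
Qed.

End NearestPoint.

Lemma approx_supporting_direction (R : realType) (p : nat) (Y : set 'rV[R]_p) y0 :
  compact Y -> convex_rV Y -> Y y0 -> ~ interior Y y0 ->
  forall e, 0 < e -> exists2 a : 'rV[R]_p, `|a| = 1 &
    forall y, Y y -> rdot a (y - y0) <= e.
Proof.
move=> cY cvY Yy0 y0_bd e e0.
set c : R := p%:R.
have c0 : 0 <= c by rewrite ler0n.
have c_sqr : c <= c ^+ 2 by rewrite -natrX ler_nat; case: (p) => // n; rewrite leq_pmulr.
set eta := e / (1 + c * (1 + c)).
have eta0 : 0 < eta by rewrite divr_gt0 // ltr_pwDl // mulr_ge0 // addr_ge0.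
have [z zy0 Yz] : exists2 z, `|y0 - z| < eta & ~ Y z.
  apply: contrapT => Yball; apply: y0_bd; apply/nbhs_ballP; exists eta => // z.
  by rewrite -ball_normE /= => zy0; apply: contrapT => Yz; apply: Yball; exists z.
have [P YP Pmin] := nearest_point_exists z cY (ex_intro _ y0 Yy0).
have zP0 : `|z - P| != 0 by rewrite normr_eq0 subr_eq0; apply: contraPneq Yz => ->.
have zP_le : `|z - P| <= c * `|y0 - z|.
  rewrite -(@ler_pXn2r _ 2) ?nnegrE ?mulr_ge0 // exprMn.
  apply: le_trans (sqr_norm_le_rdot _) _; apply: le_trans (Pmin _ Yy0) _.
  apply: le_trans (rdot_le_sqr_norm _) _; rewrite distrC.
  by apply: ler_wpM2r; rewrite // sqr_ge0.
set a := `|z - P|^-1 *: (z - P).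
have a1 : `|a| = 1 by rewrite normrZ normfV normr_id mulVf.
have a_close : rdot a (P - y0) <= e.
  have Py0 : `|P - y0| <= (1 + c) * `|y0 - z|.
    rewrite mulrDl mul1r [in X in _ <= X]addrC; apply: le_trans (ler_distD z P y0) _.
    by rewrite distrC [`|z - y0|]distrC lerD.
  apply: le_trans (ler_norm _) _; apply: le_trans (normr_rdot_le _ _) _.
  rewrite a1 mul1r; apply: le_trans (ler_wpM2l c0 Py0) _; rewrite mulrA.
  apply: le_trans (ler_wpM2l (mulr_ge0 c0 (addr_ge0 ler01 c0)) (ltW zy0)) _.
  rewrite /eta mulrCA ger_pMr //.
  by rewrite ler_pdivrMr ?mul1r ?lerDr // ltr_pwDl // mulr_ge0 ?addr_ge0.
exists a => // y Yy.
have a_normal : rdot a (y - P) <= 0.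
  by rewrite rdotZl mulr_ge0_le0 ?invr_ge0 // (nearest_point_normal cvY YP Pmin).
have -> : y - y0 = (y - P) + (P - y0) by rewrite addrA subrK.
by rewrite rdotDr; lra.
Qed.

Lemma differentiable_jacobian_approx (R : realType) (m n : nat)
    (f : 'rV[R]_m -> 'rV[R]_n) u : differentiable f u ->
  forall e, 0 < e -> exists2 d, 0 < d &
    forall h, `|h| < d -> `|f (u + h) - f u - h *m 'J f u| <= e * `|h|.
Proof.
move=> df e e0.
have /eqaddoP/(_ e e0)/nbhs_norm0P[d d0 Hd] := diff_locally df.
exists d => // h /Hd; rewrite /jacobian mul_rV_lin1 /=.
by rewrite (addrC u) -addrA -opprD.
Qed.

Lemma sym_posdef_unitmx (R : realType) (p : nat) (M : 'M[R]_p) :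
  sym_posdef M -> M \in unitmx.
Proof.
move=> [_ Mpos]; rewrite unitmxE unitfE; apply/negP => /det0P [v v0 vM].
by have := Mpos v v0; rewrite vM mul0mx mxE ltxx.
Qed.

Lemma unitmx_jacobian_image_approx (R : realType) (p : nat)
    (f : 'rV[R]_p -> 'rV[R]_p) (U : set 'rV[R]_p) u :
  differentiable f u -> 'J f u \in unitmx -> nbhs u U ->
  forall e, 0 < e -> exists2 t, 0 < t &
    forall a, `|a| <= 1 -> exists2 x, U x & `|f x - f u - t *: a| <= e * t.
Proof.
move=> df Ju Uu e e0.
set N := invmx ('J f u); set C := 1 + p%:R * `|N|.
have C0 : 0 < C by rewrite ltr_pwDl // mulr_ge0.
have [d d0 Hd] := differentiable_jacobian_approx df (divr_gt0 e0 C0).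
have [r r0 Hr] : exists2 r, 0 < r & forall h, `|h| < r -> U (u + h).
  move: Uu => /nbhs_ballP [r r0 Hr]; exists r => // h hr; apply: Hr.
  by rewrite -ball_normE /= opprD addrA subrr sub0r normrN.
have m0 : 0 < minr d r by rewrite lt_min d0.
have [md mr] : minr d r <= d /\ minr d r <= r by rewrite !ge_min !lexx orbT.
set t := minr d r / (2 * C).
have t0 : 0 < t by rewrite divr_gt0 ?mulr_gt0.
have tC : t * C = minr d r / 2 by rewrite /t; field; rewrite gt_eqF.
exists t => // a a1.
set h := t *: (a *m N).
have hC : `|h| <= t * C.
  rewrite normrZ gtr0_norm // ler_pM2l //; apply: le_trans (normr_mulmx_le _ _) _.
  have := ler_wpM2l (ler0n R p) (ler_wpM2r (normr_ge0 N) a1).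
  by rewrite mul1r /C; lra.
have hJ : h *m 'J f u = t *: a by rewrite -scalemxAl -mulmxA mulVmx ?mulmx1.
have [hd hr] : `|h| < d /\ `|h| < r by split; lra.
exists (u + h); first exact: Hr.
rewrite -hJ; apply: le_trans (Hd _ hd) _.
apply: le_trans (ler_wpM2l (ltW (divr_gt0 e0 C0)) hC) _.
by rewrite mulrCA divfK ?gt_eqF // mulrC.
Qed.

Theorem mainTheorem11 (R : realType) (p : nat) (U : set 'rV[R]_p)
  (q : 'rV[R]_p -> 'rV[R]_p) :
  compact U -> convex_rV U -> interior U !=set0 ->
  {within U, continuous q} ->
  (forall u, interior U u -> differentiable q u) ->
  (forall u, interior U u -> sym_posdef ('J q u)) ->
  convex_rV (q @` U) ->
  forall u, interior U u -> interior (q @` U) (q u).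
Proof.
move=> cU _ _ qc qd qpd cvY u uint; apply: contrapT => qu_bd.
set c : R := p%:R; set e := (2 * (1 + c))^-1.
have c0 : 0 <= c by rewrite ler0n.
have e0 : 0 < e by rewrite invr_gt0 mulr_gt0 // ltr_pwDl.
have [t t0 image_approx] := unitmx_jacobian_image_approx (qd u uint)
  (sym_posdef_unitmx (qpd u uint)) uint e0.
have Yqu : (q @` U) (q u) by exists u => //; exact: interior_subset.
have [a a1 supp] := approx_supporting_direction (continuous_compact qc cU) cvY Yqu
  qu_bd (divr_gt0 t0 (ltr0n R 4)).
have [x Ux qx_approx] : exists2 x, U x & `|q x - q u - t *: a| <= e * t.
  by apply: image_approx; rewrite a1.
have := supp (q x) (ex_intro2 _ _ x Ux erefl).
have := rdot_ge_near_scale a1 (ltW t0) qx_approx.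
have : c * (e * t) <= t / 2.
  rewrite mulrA [_ * t]mulrC ler_wpM2l ?(ltW t0) //.
  by rewrite /e ler_pdivrMr ?mulr_gt0 ?ltr_pwDl // mulrA mulVf ?pnatr_eq0 // mul1r; lra.
lra.
Qed.
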